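(* Assume the setting of the context. For any $\Delta=(h,\Delta x)$, any $i\in\mathbb{N}$, any $j\in\{1,2\}$, any bounded $\mathsf{U},\mathsf{V}\in B(\mathcal{A}^{\Delta x})$ with $\mathsf{U}_k\le\mathsf{V}_k$ for all $k\in\mathbb{N}$, and any $(\mathsf{q}_1,\mathsf{q}_2),(\mathsf{m}_1,\mathsf{m}_2)\in\mathbb{R}^2$ such that $\theta:=\mathsf{q}_j-\mathsf{m}_j=\max_{k=1,2}\{\mathsf{q}_k-\mathsf{m}_k\}\ge0$, we have $$\mathcal{F}^\Delta_j\big(x_i,(\mathsf{q}_j,\mathsf{q}_{\bar\jmath}),\mathsf{U}+\theta\big)-\mathcal{F}^\Delta_j\big(x_i,(\mathsf{m}_j,\mathsf{m}_{\bar\jmath}),\mathsf{V}\big)\ge\rho\theta.$$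
   Context: Constants: $\rho>0$, $r<\rho$, $0<y_1<y_2$, $\gamma>1$, $\underline{x}\le0$ with $\rho\underline{x}+y_j>0$, $\lambda_1,\lambda_2\ge0$; $\bar\jmath=3-j$; $u(c)=\frac{c^{1-\gamma}}{1-\gamma}$ for $c>0$, $u(0)=-\infty$. Discretization $\Delta=(h,\Delta x)$ with $h,\Delta x>0$ and $\rho h<1$, $\lambda_jh<1$. Grid $x_i=\underline{x}+i\Delta x$, $i\in\mathbb{N}=\{0,1,2,\dots\}$, $\mathcal{A}^{\Delta x}=\{x_i\}$; $B(\mathcal{A}^{\Delta x})$ is the space of bounded real sequences $(\mathsf{U}_k)_{k\in\mathbb{N}}$. The $\mathbb{Q}_1$ basis: $\beta_k(x)=\max\{0,1-|x-x_k|/\Delta x\}$ for $x\ge\underline{x}$ (so $\beta_k\ge0$, $\sum_k\beta_k\equiv1$ on $[\underline{x},\infty)$, $\beta_k(x_i)=\delta_{ik}$). Admissible controls $\mathcal{C}^\Delta_j(x_i)=\{c\ge0: x_i+h(rx_i+y_j-c)\ge\underline{x}\}$, and $s_{i,j}(c)=rx_i+y_j-c$. The scheme: for $(\mathsf{q}_j,\mathsf{q}_{\bar\jmath})\in\mathbb{R}^2$, $\mathsf{U}\in B(\mathcal{A}^{\Delta x})$, $$\mathcal{F}^\Delta_j(x_i,(\mathsf{q}_j,\mathsf{q}_{\bar\jmath}),\mathsf{U})=\rho\mathsf{q}_j-(1-\rho h)\lambda_j(\mathsf{q}_{\bar\jmath}-\mathsf{q}_j)-\sup_{c\in\mathcal{C}^\Delta_j(x_i)}\Big\{u(c)+\frac{(1-\rho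 h)(1-\lambda_jh)}{h}\Big(\sum_k\beta_k(x_i+hs_{i,j}(c))\mathsf{U}_k-\mathsf{q}_j\Big)\Big\}.$$ *)

From HB Require Import structures.
From mathcomp Require Import all_boot all_order all_algebra.
From mathcomp Require Import all_classical all_reals all_analysis.
Set Implicit Arguments. Unset Strict Implicit. Unset Printing Implicit Defensive.
Import Order.TTheory GRing.Theory Num.Theory.
Local Open Scope ring_scope.
Local Open Scope classical_set_scope.

Section SchemeDefs.
Variable R : realType.

(* the other regime index: jbar = 3 - j, regimes indexed by 'I_2 *)
Definition jbar (j : 'I_2) : 'I_2 := if j == ord0 then ord_max else ord0.

Definition grid (xl dx : R) (i : nat) : R := xl + i%:R * dx.

Definition beta (xl dx : R) (k : nat) (x : R) : R :=
  Num.max 0 (1 - `|x - grid xl dx k| / dx).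

(* sum_k beta_k(x) U_k, as an infinite series (only finitely many nonzero terms) *)
Definition interp (xl dx : R) (U : nat -> R) (x : R) : R :=
  limn (series (fun k : nat => (beta xl dx k x * U k : R^o))).

Definition util (gam c : R) : \bar R :=
  if 0 < c then ((c `^ (1 - gam)) / (1 - gam))%:E else -oo%E.

Definition drift (r : R) (y : 'I_2 -> R) (xl dx : R) (i : nat) (j : 'I_2) (c : R) : R :=
  r * grid xl dx i + y j - c.

Definition admissible (r : R) (y : 'I_2 -> R) (xl h dx : R) (i : nat) (j : 'I_2) : set R :=
  [set c | 0 <= c /\ xl <= grid xl dx i + h * drift r y xl dx i j c].

(* the scheme F^Delta_j(x_i, (qj, qjbar), U), valued in the extended reals
   (the supremum is -oo if no admissible control gives a finite value) *)
Definition Fscheme (rho r gam xl : R) (y lam : 'I_2 -> R) (h dx : R)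
  (j : 'I_2) (i : nat) (qj qjb : R) (U : nat -> R) : \bar R :=
  ((rho * qj - (1 - rho * h) * lam j * (qjb - qj))%:E
   - ereal_sup [set (util gam c +
        ((1 - rho * h) * (1 - lam j * h) / h *
           (interp xl dx U (grid xl dx i + h * drift r y xl dx i j c) - qj))%:E)%E
       | c in admissible r y xl h dx i j])%E.

End SchemeDefs.

From HB Require Import structures.
From mathcomp Require Import all_boot all_order all_algebra.
From mathcomp Require Import all_classical all_reals all_analysis.
From mathcomp Require Import ring lra.
Import Order.TTheory GRing.Theory Num.Theory.
Set Implicit Arguments. Unset Strict Implicit. Unset Printing Implicit Defensive.
Local Open Scope ring_scope.

(** The Q1 weights are nonnegative with sum at most one, so interpolating
    [U + theta] exceeds interpolating [V] by at most [theta = q_j - m_j]: every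
    candidate in the supremum is no larger at [(q_j, U + theta)] than at
    [(m_j, V)].  The affine part grows by [rho theta] plus
    [(1 - rho h) lam_j (theta - (q_jbar - m_jbar))], which is nonnegative
    because [theta] is the largest increment. *)

Lemma sum_hat_le1 (R : realFieldType) (t : R) (N : nat) :
  \sum_(k < N) Num.max 0 (1 - `|t - k%:R|) <= 1.
Proof.
suff [] : \sum_(k < N) Num.max 0 (1 - `|t - k%:R|) <= 1 /\
          \sum_(k < N) Num.max 0 (1 - `|t - k%:R|) <= Num.max 0 (N%:R - t) by [].
elim: N => [|N [le1 leN]]; first by rewrite big_ord0 ler01 le_max lexx.
rewrite big_ord_recr /= -natr1.
move: (\sum_(k < N) _) le1 leN => S le1 leN.
have d_ge := ler_norm (t - N%:R); have d_le := ler_norm (N%:R - t).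
rewrite distrC in d_le; move: `|t - N%:R| d_ge d_le => d d_ge d_le.
case: (leP 0 (N%:R - t)) leN; case: (leP 0 (1 - d)); case: (leP 0 (N%:R + 1 - t));
  by move=> *; split; lra.
Qed.

Section Q1Interpolation.
Variables (R : realType) (xl dx : R).
Hypothesis dx_gt0 : 0 < dx.

Lemma beta_ge0 k x : 0 <= beta xl dx k x.
Proof. by rewrite /beta le_max lexx. Qed.

Lemma betaE k x : beta xl dx k x = Num.max 0 (1 - `|(x - xl) / dx - k%:R|).
Proof.
have -> : (x - xl) / dx - k%:R = (x - grid xl dx k) / dx.
  by rewrite /grid; field; rewrite gt_eqF.
by rewrite normrM (gtr0_norm (x := dx^-1)) ?invr_gt0.
Qed.

Lemma beta_eq0 k x : (x - xl) / dx + 1 <= k%:R -> beta xl dx k x = 0.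
Proof. by move=> far; rewrite betaE max_l // subr_le0 ler0_norm; lra. Qed.

Lemma sum_beta_le1 x N : \sum_(k < N) beta xl dx k x <= 1.
Proof.
under eq_bigr do rewrite betaE.
exact: sum_hat_le1.
Qed.

Lemma interp_bigE x : exists N, forall F : nat -> R,
  interp xl dx F x = \sum_(k < N) beta xl dx k x * F k.
Proof.
have /archi_boundP N_gt : 0 <= `|(x - xl) / dx| + 1 by rewrite addr_ge0.
set N := Num.Def.archi_bound _ in N_gt; exists N => F.
apply: norm_lim_near_cst; near=> n.
have Nn : (N <= n)%N by near: n; exists N.
rewrite /series /= -(big_mkord xpredT (fun k => beta xl dx k x * F k)).
rewrite (big_cat_nat (leq0n N) Nn) /=.
rewrite [X in _ + X]big1_seq ?addr0 ?big_mkord //.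
move=> k /andP[_]; rewrite mem_index_iota => /andP[Nk _].
suff -> : beta xl dx k x = 0 by rewrite mul0r.
apply: beta_eq0; rewrite -(ler_nat R) in Nk.
by have := ler_norm ((x - xl) / dx); lra.
Unshelve. all: by end_near.
Qed.

Lemma le_interp (U V : nat -> R) x :
  (forall k, U k <= V k) -> interp xl dx U x <= interp xl dx V x.
Proof.
move=> UV; have [N interpE] := interp_bigE x; rewrite !interpE.
by apply: ler_sum => k _; rewrite ler_wpM2l ?beta_ge0.
Qed.

Lemma interpDr_le (U : nat -> R) c x :
  0 <= c -> interp xl dx (fun k => U k + c) x <= interp xl dx U x + c.
Proof.
move=> c_ge0; have [N interpE] := interp_bigE x; rewrite !interpE.
under eq_bigr do rewrite mulrDr.
rewrite big_split /= lerD2l -mulr_suml ler_piMl //.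
exact: sum_beta_le1.
Qed.

End Q1Interpolation.

Lemma le_ereal_sup_image (R : realType) (T : Type) (A : set T) (f g : T -> \bar R) :
  (forall t, A t -> (f t <= g t)%E) ->
  (ereal_sup [set f t | t in A] <= ereal_sup [set g t | t in A])%E.
Proof.
move=> fg; apply: ge_ereal_sup => _ [t At <-].
by apply: le_trans (fg t At) _; apply: ereal_sup_ubound; exists t.
Qed.

Lemma le_Fscheme (R : realType) (rho r gam xl : R) (y lam : 'I_2 -> R) (h dx : R)
    (j : 'I_2) (i : nat) (qj qjb mj mjb c : R) (U V : nat -> R) :
  0 < h -> rho * h <= 1 -> lam j * h <= 1 ->
  (forall z, interp xl dx U z - qj <= interp xl dx V z - mj) ->
  rho * mj - (1 - rho * h) * lam j * (mjb - mj) + c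
    <= rho * qj - (1 - rho * h) * lam j * (qjb - qj) ->
  (Fscheme rho r gam xl y lam h dx j i mj mjb V + c%:E
    <= Fscheme rho r gam xl y lam h dx j i qj qjb U)%E.
Proof.
move=> h_gt0 rhoh lamh interpUV le_affine.
rewrite /Fscheme addeAC -EFinD; apply: leeB; first by rewrite lee_fin.
apply: le_ereal_sup_image => ctl _; rewrite leeD2l // lee_fin.
apply: ler_wpM2l; last exact: interpUV.
by rewrite divr_ge0 ?mulr_ge0 ?subr_ge0 // ltW.
Qed.

Theorem mainTheorem10 (R : realType) (rho r gam xl : R) (y lam : 'I_2 -> R)
  (h dx : R) (i : nat) (j : 'I_2) (U V : nat -> R) (q m : 'I_2 -> R) :
  0 < rho -> r < rho -> 0 < y ord0 -> y ord0 < y ord_max -> 1 < gam ->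
  xl <= 0 -> (forall k : 'I_2, 0 < rho * xl + y k) ->
  (forall k : 'I_2, 0 <= lam k) ->
  0 < h -> 0 < dx -> rho * h < 1 -> (forall k : 'I_2, lam k * h < 1) ->
  (exists M : R, forall k, `|U k| <= M) ->
  (exists M : R, forall k, `|V k| <= M) ->
  (forall k, U k <= V k) ->
  (forall k : 'I_2, q k - m k <= q j - m j) ->
  0 <= q j - m j ->
  (Fscheme rho r gam xl y lam h dx j i (q j) (q (jbar j))
       (fun k => (U k + (q j - m j))%R)
   >= Fscheme rho r gam xl y lam h dx j i (m j) (m (jbar j)) V
      + (rho * (q j - m j))%:E)%E.
Proof.
move=> _ _ _ _ _ _ _ lam_ge0 h_gt0 dx_gt0 rhoh lamh _ _ UV theta_max theta_ge0.
apply: le_Fscheme => //; [exact: ltW | exact: ltW |..].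
- move=> z; have := interpDr_le xl dx_gt0 U z theta_ge0.
  by have := le_interp xl dx_gt0 z UV; lra.
- have : 0 <= (1 - rho * h) * lam j * ((q j - m j) - (q (jbar j) - m (jbar j))).
    by rewrite !mulr_ge0 ?subr_ge0 // ltW.
  lra.
Qed.
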